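(* Let $n\ge2$, $1\le r\le n-1$ and $\alpha,\beta\in\mathbb{Z}_2^n$. Then $\mathrm{adp}^{\mathrm{XR}}_r(\alpha,\beta\to0)=\mathrm{adp}^{\oplus}(\alpha,\beta\to0)$.
   Context: For $x\in\mathbb{Z}_2^n$, $x=(x_0,\dots,x_{n-1})$ is identified with the integer $\sum_i x_i2^{n-1-i}$; $+$ is addition modulo $2^n$, $\oplus$ is bitwise XOR, $x\lll r=(x_r,\dots,x_{n-1},x_0,\dots,x_{r-1})$. For $f:(\mathbb{Z}_2^n)^2\to\mathbb{Z}_2^n$, $\mathrm{adp}^f(\alpha,\beta\to\gamma)=4^{-n}\#\{(x,y): f(x+\alpha,y+\beta)=f(x,y)+\gamma\}$. $\mathrm{adp}^{\oplus}$ is this for $f(x,y)=x\oplus y$, and $\mathrm{adp}^{\mathrm{XR}}_r$ for $f(x,y)=(x\oplus y)\lll r$. *)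

From mathcomp Require Import all_boot all_algebra.
Set Implicit Arguments. Unset Strict Implicit. Unset Printing Implicit Defensive.
Import GRing.Theory.

(* Elements of Z_2^n are bit tuples x = (x_0,...,x_{n-1}); x_0 is the most
   significant bit: x is identified with sum_i x_i 2^(n-1-i). *)
Definition bvec (n : nat) := n.-tuple bool.

Definition bv_to_nat n (x : bvec n) : nat :=
  \sum_(i < n) (tnth x i) * 2 ^ (n - 1 - i).

(* the n low-order bits of k (i.e. k mod 2^n), MSB first *)
Definition bv_of_nat n (k : nat) : bvec n :=
  [tuple odd (k %/ 2 ^ (n - 1 - i)) | i < n].

Definition addv n (x y : bvec n) : bvec n := bv_of_nat n (bv_to_nat x + bv_to_nat y).

Definition xorv n (x y : bvec n) : bvec n :=
  [tuple xorb (tnth x i) (tnth y i) | i < n].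

Definition rotlv n (x : bvec n) (r : nat) : bvec n :=
  [tuple nth false x ((i + r) %% n) | i < n].

Definition adp n (f : bvec n -> bvec n -> bvec n) (a b g : bvec n) : rat :=
  (#|[set p : bvec n * bvec n |
        f (addv p.1 a) (addv p.2 b) == addv (f p.1 p.2) g]|%:R
   / (4 ^ n)%:R)%R.

Definition adp_xor n (a b g : bvec n) : rat := adp (@xorv n) a b g.

Definition adp_XR n (r : nat) (a b g : bvec n) : rat :=
  adp (fun x y => rotlv (xorv x y) r) a b g.

Definition zerov n : bvec n := [tuple false | _ < n].

(* Adding the zero difference is the identity, so for gamma = 0 the condition
   defining adp^f is f(x + alpha, y + beta) = f(x, y).  Post-composing f with
   an injective map such as a rotation does not change this condition, hence
   adp^XR_r(alpha, beta -> 0) = adp^xor(alpha, beta -> 0) for every n and r. *)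

From Pilot Require Import Defs.
From mathcomp Require Import all_boot all_algebra zify.

Lemma bv_to_nat_cons n h (t : bvec n) :
  bv_to_nat [tuple of h :: t] = h * 2 ^ n + bv_to_nat t.
Proof.
rewrite /bv_to_nat big_ord_recl /= subn1 subn0; congr (_ + _).
apply: eq_bigr => i _; rewrite tnthS /bump leq0n add1n.
by congr (_ * 2 ^ _); lia.
Qed.

Lemma bv_to_nat_lt n (t : bvec n) : bv_to_nat t < 2 ^ n.
Proof.
elim: n t => [|n IH] t; first by rewrite /bv_to_nat big_ord0.
case/tupleP: t => h t; rewrite bv_to_nat_cons expnS.
by have := IH t; case: h => /=; lia.
Qed.

Lemma odd_bv_to_nat_div n (t : bvec n) (i : 'I_n) :
  odd (bv_to_nat t %/ 2 ^ (n - 1 - i)) = tnth t i.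
Proof.
elim: n t i => [|n IH] t i; first by case: i.
case/tupleP: t => h t; rewrite bv_to_nat_cons.
case: (unliftP ord0 i) => [j ->|->]; last first.
  rewrite tnth0 /= subn1 subn0 divnDl ?dvdn_mull // mulnK ?expn_gt0 //.
  by rewrite divn_small ?bv_to_nat_lt // addn0; case: h.
rewrite tnthS /= subn1 -IH.
have -> : n - bump 0 j = n - 1 - j by rewrite /bump leq0n add1n; lia.
have n_split : n = (n - 1 - j) + j.+1 by have := ltn_ord j; lia.
rewrite [in 2 ^ n]n_split expnD mulnC -mulnA divnDl ?dvdn_mulr //.
by rewrite mulKn ?expn_gt0 // oddD oddM expnS oddM.
Qed.

Lemma bv_to_natK n : cancel (@bv_to_nat n) (bv_of_nat n).
Proof.
by move=> x; apply: eq_from_tnth => i; rewrite tnth_mktuple odd_bv_to_nat_div.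
Qed.

Lemma addv_zerov n (x : bvec n) : Defs.addv x (zerov n) = x.
Proof.
rewrite /Defs.addv; have -> : bv_to_nat (zerov n) = 0.
  by rewrite /bv_to_nat big1 // => i _; rewrite tnth_mktuple.
by rewrite addn0 bv_to_natK.
Qed.

Lemma rotlv_inj n r : injective (fun x : bvec n => rotlv x r).
Proof.
move=> u v /= E; apply: eq_from_tnth => k.
have n_gt0 : 0 < n by case: k => k' /=; lia.
have := congr1 (fun w => tnth w (Ordinal (ltn_pmod (k + n - r %% n) n_gt0))) E.
rewrite !tnth_mktuple /= modnDml.
have -> : k + n - r %% n + r = (r %/ n).+1 * n + k.
  by rewrite {2}(divn_eq r n); have := ltn_pmod r n_gt0; lia.
by rewrite modnMDl modn_small // !(tnth_nth false).
Qed.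

Lemma adp_comp_inj0 n (f : bvec n -> bvec n -> bvec n) (h : bvec n -> bvec n)
    (a b : bvec n) :
  injective h -> adp (fun x y => h (f x y)) a b (zerov n) = adp f a b (zerov n).
Proof.
move=> h_inj; rewrite /adp; congr (_%:R / _)%R.
apply: eq_card => p; rewrite !inE !addv_zerov.
by apply/eqP/eqP => [/h_inj | ->].
Qed.

Theorem proposition1 (n r : nat) (a b : bvec n) :
  2 <= n -> 1 <= r <= n - 1 ->
  adp_XR r a b (zerov n) = adp_xor a b (zerov n).
Proof.
move=> _ _.
exact: (@adp_comp_inj0 n (@xorv n) (fun x => rotlv x r) a b (@rotlv_inj n r)).
Qed.
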